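(* Let $(X,d)$ be a geodesic length space that is a proper metric space, $I\subseteq\mathbb{R}$ an open interval and $f:I\to(0,\infty)$ continuous. Then the generalized cone $I\times_f X$ is globally hyperbolic.
   Context: $Y=I\times_f X$ is the set $I\times X$ with metric $D((t,x),(t',x'))=|t-t'|+d(x,x')$. A curve $\gamma=(\alpha,\beta)$ is causal if $D$-absolutely continuous, $\alpha$ strictly monotone and $-\dot\alpha^2+(f\circ\alpha)^2v_\beta^2\le0$ a.e. ($v_\beta$ the metric derivative of $\beta$), future directed if $\dot\alpha>0$ a.e.; $y\le y'$ iff $y=y'$ or there is a future directed causal curve from $y$ to $y'$. Causal diamonds: $J(p,q)=\{r: p\le r\le q\}$. Global hyperbolicity (for Lorentzian pre-length spaces, in the sense of Kunzinger–Sämann): the space is non-totally imprisoning (for every compact set $K$ there is $C>0$ such that the $D$-length of every causal curve contained in $K$ is at most $C$) and $J(p,q)$ is compact for all $p,q$. *)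

From Stdlib Require Import Reals Lra List.
From Coquelicot Require Import Rbar.
Open Scope R_scope.

Fixpoint psum (g : nat -> R) (n : nat) : R :=
  match n with O => 0 | S k => psum g k + g k end.

Definition is_metric {X : Type} (d : X -> X -> R) : Prop :=
  (forall x y, 0 <= d x y) /\ (forall x y, d x y = 0 <-> x = y) /\
  (forall x y, d x y = d y x) /\ (forall x y z, d x z <= d x y + d y z).

Definition open_set {T : Type} (dist : T -> T -> R) (U : T -> Prop) : Prop :=
  forall x, U x -> exists r, 0 < r /\ forall y, dist x y < r -> U y.

Definition compact_set {T : Type} (dist : T -> T -> R) (K : T -> Prop) : Prop :=
  forall (Idx : Type) (U : Idx -> T -> Prop),
    (forall i, open_set dist (U i)) ->
    (forall x, K x -> exists i, U i x) ->
    exists l : list Idx, forall x, K x -> exists i, In i l /\ U i x.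

Definition proper_metric {X : Type} (d : X -> X -> R) : Prop :=
  forall x r, compact_set d (fun y => d x y <= r).

Definition is_partition (a b : R) (n : nat) (t : nat -> R) : Prop :=
  t O = a /\ t n = b /\ forall i, (i < n)%nat -> t i <= t (S i).

Definition partition_sum {T : Type} (dist : T -> T -> R) (g : R -> T)
  (n : nat) (t : nat -> R) : R :=
  psum (fun i => dist (g (t i)) (g (t (S i)))) n.

Definition length_le {T : Type} (dist : T -> T -> R) (g : R -> T) (a b C : R) : Prop :=
  forall n t, is_partition a b n t -> partition_sum dist g n t <= C.

Definition has_length {T : Type} (dist : T -> T -> R) (g : R -> T) (a b L : R) : Prop :=
  is_lub (fun s => exists n t, is_partition a b n t /\ s = partition_sum dist g n t) L.

Definition continuous_on_int {T : Type} (dist : T -> T -> R) (g : R -> T) (a b : R) : Prop :=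
  forall s, a <= s <= b -> forall eps, 0 < eps -> exists delta, 0 < delta /\
    forall s', a <= s' <= b -> Rabs (s' - s) < delta -> dist (g s') (g s) < eps.

Definition is_length_space {X : Type} (d : X -> X -> R) : Prop :=
  forall x y,
    (forall (g : R -> X) L, continuous_on_int d g 0 1 -> g 0 = x -> g 1 = y ->
        has_length d g 0 1 L -> d x y <= L) /\
    (forall eps, 0 < eps -> exists (g : R -> X) L, continuous_on_int d g 0 1 /\
        g 0 = x /\ g 1 = y /\ has_length d g 0 1 L /\ L < d x y + eps).

Definition is_geodesic_space {X : Type} (d : X -> X -> R) : Prop :=
  forall x y, exists g : R -> X, continuous_on_int d g 0 1 /\
    g 0 = x /\ g 1 = y /\ has_length d g 0 1 (d x y).

Definition negligible (N : R -> Prop) : Prop :=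
  forall eps, 0 < eps -> exists l u : nat -> R,
    (forall k, l k <= u k) /\
    (forall x, N x -> exists k, l k < x < u k) /\
    (forall n, psum (fun k => u k - l k) n < eps).

Definition ae_on (a b : R) (P : R -> Prop) : Prop :=
  exists N, negligible N /\ forall t, a <= t <= b -> ~ N t -> P t.

Definition in_I (lo hi : Rbar) (t : R) : Prop :=
  Rbar_lt lo (Finite t) /\ Rbar_lt (Finite t) hi.

Definition in_Y {X : Type} (lo hi : Rbar) (y : R * X) : Prop := in_I lo hi (fst y).

Definition cone_dist {X : Type} (d : X -> X -> R) (y y' : R * X) : R :=
  Rabs (fst y - fst y') + d (snd y) (snd y').

Definition abs_cont {T : Type} (dist : T -> T -> R) (g : R -> T) (a b : R) : Prop :=
  forall eps, 0 < eps -> exists delta, 0 < delta /\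
    forall n (s t : nat -> R),
      (forall i, (i < n)%nat -> a <= s i /\ s i <= t i /\ t i <= b) ->
      (forall i, (S i < n)%nat -> t i <= s (S i)) ->
      psum (fun i => t i - s i) n < delta ->
      psum (fun i => dist (g (s i)) (g (t i))) n < eps.

Definition has_deriv_on (h : R -> R) (a b t l : R) : Prop :=
  forall eps, 0 < eps -> exists delta, 0 < delta /\
    forall s, a <= s <= b -> s <> t -> Rabs (s - t) < delta ->
      Rabs ((h s - h t) / (s - t) - l) < eps.

Definition has_metric_deriv {X : Type} (d : X -> X -> R) (g : R -> X) (a b t v : R) : Prop :=
  forall eps, 0 < eps -> exists delta, 0 < delta /\
    forall s, a <= s <= b -> s <> t -> Rabs (s - t) < delta ->
      Rabs (d (g s) (g t) / Rabs (s - t) - v) < eps.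

Definition causal_curve {X : Type} (d : X -> X -> R) (lo hi : Rbar) (f : R -> R)
  (g : R -> R * X) (a b : R) : Prop :=
  a < b /\
  (forall s, a <= s <= b -> in_Y lo hi (g s)) /\
  abs_cont (cone_dist d) g a b /\
  ((forall s s', a <= s -> s < s' -> s' <= b -> fst (g s) < fst (g s')) \/
   (forall s s', a <= s -> s < s' -> s' <= b -> fst (g s') < fst (g s))) /\
  ae_on a b (fun t => exists da v,
     has_deriv_on (fun s => fst (g s)) a b t da /\
     has_metric_deriv d (fun s => snd (g s)) a b t v /\
     - da ^ 2 + (f (fst (g t))) ^ 2 * v ^ 2 <= 0).

Definition future_directed {X : Type} (d : X -> X -> R) (lo hi : Rbar) (f : R -> R)
  (g : R -> R * X) (a b : R) : Prop :=
  causal_curve d lo hi f g a b /\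
  ae_on a b (fun t => exists da, has_deriv_on (fun s => fst (g s)) a b t da /\ 0 < da).

Definition causal_le {X : Type} (d : X -> X -> R) (lo hi : Rbar) (f : R -> R)
  (y y' : R * X) : Prop :=
  y = y' \/ exists (g : R -> R * X) a b,
    future_directed d lo hi f g a b /\ g a = y /\ g b = y'.

Definition diamond {X : Type} (d : X -> X -> R) (lo hi : Rbar) (f : R -> R)
  (p q : R * X) (r : R * X) : Prop :=
  in_Y lo hi r /\ causal_le d lo hi f p r /\ causal_le d lo hi f r q.

Definition non_totally_imprisoning {X : Type} (d : X -> X -> R) (lo hi : Rbar)
  (f : R -> R) : Prop :=
  forall K : R * X -> Prop,
    (forall y, K y -> in_Y lo hi y) -> compact_set (cone_dist d) K ->
    exists C, 0 < C /\ forall (g : R -> R * X) a b,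
      causal_curve d lo hi f g a b -> (forall s, a <= s <= b -> K (g s)) ->
      length_le (cone_dist d) g a b C.

Definition globally_hyperbolic {X : Type} (d : X -> X -> R) (lo hi : Rbar)
  (f : R -> R) : Prop :=
  non_totally_imprisoning d lo hi f /\
  forall p q, in_Y lo hi p -> in_Y lo hi q ->
    compact_set (cone_dist d) (diamond d lo hi f p q).

(* A causal curve (alpha, beta) of the cone has metric speed |beta'| <= |alpha'| / f(alpha).
   An absolutely continuous curve whose speed is a.e. dominated by |h'|, h monotone, moves
   by at most |h(w) - h(u)| (by real induction, after covering the exceptional null set by
   intervals of small total length), so along a causal curve
   d(beta u, beta w) <= |G(alpha w) - G(alpha u)| for any G with G' >= 1 / f.
   Taking G t = M t with 1 / f <= M on a compact set bounds the length of causal curves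
   there by a multiple of their time span: non-total imprisonment.  Taking G = F, a
   primitive of 1 / f, and conversely reparametrising geodesics of X by F, shows that
   (tp, xp) <= (t, x) <= (tq, xq) iff d(xp, x) <= F t - F tp and d(x, xq) <= F tq - F t;
   so J(p, q) is a closed subset of [tp, tq] x (closed ball of X), compact by properness. *)

From Pilot Require Import Defs.
From Stdlib Require Import Reals Lra Lia List Classical ClassicalEpsilon.
From Coquelicot Require Import Rbar.
(* Re-import so that [open_set] and [compact_set] mean the metric notions of [Defs],
   not those of [Rtopology]. *)
Import Defs.
Open Scope R_scope.

Lemma psum_le (g1 g2 : nat -> R) n :
  (forall i, (i < n)%nat -> g1 i <= g2 i) -> psum g1 n <= psum g2 n.
Proof.
  induction n as [|n IH]; intros H; simpl; [lra|].
  assert (g1 n <= g2 n) by (apply H; lia).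
  assert (psum g1 n <= psum g2 n) by (apply IH; intros; apply H; lia).
  lra.
Qed.

Lemma psum_scal c (g : nat -> R) n : psum (fun i => c * g i) n = c * psum g n.
Proof. induction n as [|n IH]; simpl; [ring|rewrite IH; ring]. Qed.

Lemma psum_shift (g : nat -> R) n : psum g (S n) = g O + psum (fun i => g (S i)) n.
Proof. induction n as [|n IH]; simpl in *; [lra|rewrite IH; lra]. Qed.

(* An interval [[lft, rgt]], tagged by the index of an interval of a cover containing it. *)
Record piece := Piece { lft : R; rgt : R; tag : nat }.

Definition plen (p : piece) : R := rgt p - lft p.

Fixpoint chain (x : R) (l : list piece) : Prop :=
  match l with
  | nil => True
  | p :: l' => x <= lft p /\ lft p <= rgt p /\ chain (rgt p) l'
  end.

Fixpoint lsum (h : piece -> R) (l : list piece) : R :=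
  match l with nil => 0 | p :: l' => h p + lsum h l' end.

Lemma lsum_app h l1 l2 : lsum h (l1 ++ l2) = lsum h l1 + lsum h l2.
Proof. induction l1; simpl; lra. Qed.

Lemma lsum_le h1 h2 l : (forall p, In p l -> h1 p <= h2 p) -> lsum h1 l <= lsum h2 l.
Proof.
  induction l as [|p l IH]; simpl; intros H; [lra|].
  assert (h1 p <= h2 p) by auto. assert (lsum h1 l <= lsum h2 l) by auto. lra.
Qed.

Lemma lsum_filter h (P : piece -> bool) l :
  lsum h l = lsum h (filter P l) + lsum h (filter (fun p => negb (P p)) l).
Proof. induction l as [|p l IH]; simpl; [lra|destruct (P p); simpl; lra]. Qed.

Lemma psum_nth h l p0 : psum (fun i => h (nth i l p0)) (length l) = lsum h l.
Proof.
  induction l as [|p l IH]; [simpl; lra|].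
  change (length (p :: l)) with (S (length l)). rewrite psum_shift. simpl. lra.
Qed.

Lemma chain_mono x y l : chain y l -> x <= y -> chain x l.
Proof. destruct l; simpl; auto. intros [? ?] ?; split; [lra|auto]. Qed.

Lemma chain_app u v l1 l2 : u <= v -> chain u l1 -> chain v l2 ->
  (forall p, In p l1 -> rgt p <= v) -> chain u (l1 ++ l2).
Proof.
  revert u; induction l1 as [|p l1 IH]; intros u Huv H1 H2 H3; simpl in *.
  - now apply chain_mono with v.
  - destruct H1 as [? [? ?]]. repeat split; auto.
Qed.

Lemma chain_filter (P : piece -> bool) x l : chain x l -> chain x (filter P l).
Proof.
  revert x; induction l as [|p l IH]; intros x H; simpl in *; auto.
  destruct H as [? [? ?]]. destruct (P p); simpl.
  - repeat split; auto.
  - apply chain_mono with (rgt p); [apply IH; auto|lra].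
Qed.

Lemma chain_nth x l p0 : chain x l -> forall i, (i < length l)%nat ->
  x <= lft (nth i l p0) /\ lft (nth i l p0) <= rgt (nth i l p0) /\
  ((S i < length l)%nat -> rgt (nth i l p0) <= lft (nth (S i) l p0)).
Proof.
  revert x; induction l as [|p l IH]; intros x Hc i Hi; simpl in Hi; [lia|].
  destruct Hc as [H1 [H2 H3]]. destruct i as [|j]; simpl.
  - repeat split; auto. intro. destruct l as [|q l]; simpl in *; [lia|apply H3].
  - destruct (IH (rgt p) H3 j ltac:(lia)) as [A [B C]].
    repeat split; [lra|auto|]. intro; apply C; lia.
Qed.

Lemma chain_lower x y l : chain x l -> (forall p, In p l -> y <= lft p) -> chain y l.
Proof. destruct l as [|p l]; simpl; auto. intros [? [? ?]] Hy; auto. Qed.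

Lemma chain_lsum_le x U l : chain x l -> (forall p, In p l -> rgt p <= U) -> x <= U ->
  lsum plen l <= U - x.
Proof.
  revert x; induction l as [|p l IH]; intros x H HU Hx; simpl in *; [lra|].
  destruct H as [? [? ?]]. unfold plen at 1.
  assert (rgt p <= U) by auto.
  assert (lsum plen l <= U - rgt p) by (apply IH; auto).
  lra.
Qed.

(* Pieces sharing a tag [k] are disjoint subintervals of [[lo k, up k]]. *)
Lemma chain_lsum_le_cover (lo up : nat -> R) K x l :
  (forall k, lo k <= up k) -> chain x l ->
  (forall p, In p l -> (tag p < K)%nat /\ lo (tag p) <= lft p /\ rgt p <= up (tag p)) ->
  lsum plen l <= psum (fun k => up k - lo k) K.
Proof.
  intros Hlu. revert l x; induction K as [|K IH]; intros l x Hc Hl.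
  - destruct l as [|p l]; simpl; [lra|]. destruct (Hl p (or_introl eq_refl)); lia.
  - rewrite (lsum_filter plen (fun p => Nat.eqb (tag p) K)). simpl psum.
    assert (lsum plen (filter (fun p => Nat.eqb (tag p) K) l) <= up K - lo K).
    { apply chain_lsum_le; auto.
      - apply chain_lower with x; [now apply chain_filter|].
        intros p Hp. apply filter_In in Hp as [Hp Hk]. apply Nat.eqb_eq in Hk.
        subst. apply Hl; auto.
      - intros p Hp. apply filter_In in Hp as [Hp Hk]. apply Nat.eqb_eq in Hk.
        subst. apply Hl; auto. }
    assert (lsum plen (filter (fun p => negb (Nat.eqb (tag p) K)) l)
            <= psum (fun k => up k - lo k) K).
    { apply IH with x; [now apply chain_filter|].
      intros p Hp. apply filter_In in Hp as [Hp Hk].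
      destruct (Hl p Hp) as [? [? ?]]. apply Bool.negb_true_iff, Nat.eqb_neq in Hk.
      repeat split; auto. lia. }
    lra.
Qed.

(** * Real induction and the Lebesgue differentiation argument *)

Lemma real_induction a b (Q : R -> R -> Prop) : a <= b ->
  (forall u v w, a <= u -> u <= v -> v <= w -> w <= b -> Q u v -> Q v w -> Q u w) ->
  (forall x, a <= x <= b -> exists delta, 0 < delta /\
     forall u v, a <= u -> u <= x -> x <= v -> v <= b -> v - u < delta -> Q u v) ->
  Q a b.
Proof.
  intros Hab Hadd Hloc.
  set (E := fun x => a <= x <= b /\ Q a x).
  assert (Qaa : Q a a).
  { destruct (Hloc a (conj (Rle_refl a) Hab)) as [d [Hd Hq]]. apply Hq; lra. }
  destruct (completeness E) as [s [Hs1 Hs2]].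
  { exists b; intros x [[? ?] ?]; auto. }
  { exists a; split; [lra|auto]. }
  assert (Has : a <= s) by (apply Hs1; split; [lra|auto]).
  assert (Hsb : s <= b) by (apply Hs2; intros x [[? ?] ?]; auto).
  destruct (Hloc s (conj Has Hsb)) as [d [Hd Hq]].
  assert (Hx : exists x, E x /\ s - d / 2 < x).
  { apply NNPP; intro Hn. assert (s <= s - d / 2); [|lra].
    apply Hs2. intros x Ex. apply Rnot_lt_le. intro. apply Hn. now exists x. }
  destruct Hx as [x [[[Hax Hxb] HQx] Hxs]].
  assert (x <= s) by (apply Hs1; split; [lra|auto]).
  set (s' := Rmin b (s + d / 2)).
  assert (s' <= b) by apply Rmin_l.
  assert (s' <= s + d / 2) by apply Rmin_r.
  assert (s <= s') by (apply Rmin_glb; lra).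
  assert (Q a s') by (apply Hadd with x; try lra; auto; apply Hq; lra).
  assert (s' <= s) by (apply Hs1; split; [lra|auto]).
  unfold s', Rmin in *. destruct (Rle_dec b (s + d / 2)); [auto|lra].
Qed.

Definition subadditive_on (a b : R) (Phi : R -> R -> R) : Prop :=
  forall u v w, a <= u -> u <= v -> v <= w -> w <= b -> Phi u w <= Phi u v + Phi v w.

Definition locally_small_at (a b : R) (Phi : R -> R -> R) (x : R) : Prop :=
  forall eps, 0 < eps -> exists delta, 0 < delta /\
    forall u v, a <= u -> u <= x -> x <= v -> v <= b -> v - u < delta ->
      Phi u v <= eps * (v - u).

Definition small_on_short_chains (a b : R) (Phi : R -> R -> R) : Prop :=
  forall eps, 0 < eps -> exists delta, 0 < delta /\
    forall l, chain a l -> (forall p, In p l -> rgt p <= b) -> lsum plen l < delta ->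
      lsum (fun p => Phi (lft p) (rgt p)) l < eps.

Lemma exists_tag_bound (l : list piece) : exists K, forall p, In p l -> (tag p < K)%nat.
Proof.
  induction l as [|p l [K HK]]; [exists O; intros p []|].
  exists (S (Nat.max K (tag p))). intros q [<-|Hq]; [lia|specialize (HK q Hq); lia].
Qed.

(* A short interval around a point of [N] becomes a piece of the chain, tagged by a
   covering interval containing that point; elsewhere local smallness applies. *)
Lemma exists_cover_decomposition a b Phi N (lo up : nat -> R) eps :
  0 < eps -> subadditive_on a b Phi -> (forall x, N x -> exists k, lo k < x < up k) ->
  (forall x, a <= x <= b -> ~ N x -> locally_small_at a b Phi x) ->
  forall u0 v0, a <= u0 -> u0 <= v0 -> v0 <= b -> exists l, chain u0 l /\
    (forall p, In p l -> rgt p <= v0) /\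
    (forall p, In p l -> lo (tag p) <= lft p /\ rgt p <= up (tag p)) /\
    Phi u0 v0 <= eps * (v0 - u0) + lsum (fun p => Phi (lft p) (rgt p)) l.
Proof.
  intros Heps Hs Hcov Hl u0 v0 Hu0 Huv Hv0.
  pattern u0, v0. apply real_induction; auto.
  - intros u v w ? ? ? ? [l1 [C1 [T1 [L1 P1]]]] [l2 [C2 [T2 [L2 P2]]]].
    exists (l1 ++ l2). split; [|split; [|split]].
    + now apply chain_app with v.
    + intros p Hp. apply in_app_or in Hp as [Hp|Hp]; [specialize (T1 p Hp); lra|auto].
    + intros p Hp. apply in_app_or in Hp as [Hp|Hp]; auto.
    + rewrite lsum_app. specialize (Hs u v w). lra.
  - intros x Hx. destruct (classic (N x)) as [Nx|Nx].
    + destruct (Hcov x Nx) as [k Hk].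
      exists (Rmin (x - lo k) (up k - x)). split; [apply Rmin_glb_lt; lra|].
      intros u v ? ? ? ? ?.
      pose proof (Rmin_l (x - lo k) (up k - x)). pose proof (Rmin_r (x - lo k) (up k - x)).
      exists (Piece u v k :: nil). simpl. split; [lra|split; [|split]].
      * intros q [<-|[]]; simpl; lra.
      * intros q [<-|[]]; simpl; lra.
      * nra.
    + destruct (Hl x ltac:(lra) Nx eps Heps) as [d [Hd Hq]]. exists d; split; auto.
      intros u v ? ? ? ? ?. exists nil. simpl.
      split; [auto|split; [|split]]; try (intros p []).
      specialize (Hq u v). lra.
Qed.

(* The pieces of the decomposition lie in a cover of [N] of small total length, so by
   absolute continuity their contribution is small. *)
Lemma nonpos_of_locally_small_ae a b Phi N :
  subadditive_on a b Phi -> negligible N ->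
  (forall x, a <= x <= b -> ~ N x -> locally_small_at a b Phi x) ->
  small_on_short_chains a b Phi ->
  forall u0 v0, a <= u0 -> u0 <= v0 -> v0 <= b -> Phi u0 v0 <= 0.
Proof.
  intros Hs HN Hl HAC u0 v0 Hu0 Huv Hv0.
  apply Rle_plus_epsilon. intros e He.
  set (eps := e / (v0 - u0 + 1)).
  assert (Heps : 0 < eps) by (apply Rdiv_lt_0_compat; lra).
  assert (Heps_e : eps * (v0 - u0) + eps = e) by (unfold eps; field; lra).
  destruct (HAC eps Heps) as [delta [Hdelta Hsmall]].
  destruct (HN delta Hdelta) as [lo [up [Hlu [Hcov Hsum]]]].
  destruct (exists_cover_decomposition a b Phi N lo up eps Heps Hs Hcov Hl u0 v0)
    as [l [C [T [L P]]]]; auto.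
  destruct (exists_tag_bound l) as [K HK].
  assert (lsum plen l <= psum (fun k => up k - lo k) K)
    by (apply chain_lsum_le_cover with u0; auto).
  specialize (Hsum K).
  assert (lsum (fun p => Phi (lft p) (rgt p)) l < eps).
  { apply Hsmall; [apply chain_mono with u0; auto|intros p Hp; specialize (T p Hp)|]; lra. }
  lra.
Qed.

(* [v - u] is locally small everywhere, so an [N] containing [[a, b]] would give
   [b - a <= 0]. *)
Lemma non_negligible a b N : a < b -> negligible N -> exists x, a <= x <= b /\ ~ N x.
Proof.
  intros Hab HN. apply NNPP; intro Hn.
  assert (b - a <= 0); [|lra].
  apply (nonpos_of_locally_small_ae a b (fun u v => v - u) N); auto; try lra.
  - intros u v w; lra.
  - intros x Hx Nx. exfalso; eauto.
  - intros eps He. exists eps; split; auto.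
Qed.

Lemma ae_on_exists a b P : a < b -> ae_on a b P -> exists x, a <= x <= b /\ P x.
Proof.
  intros Hab [N [HN HP]]. destruct (non_negligible a b N Hab HN) as [x [Hx Nx]].
  exists x; auto.
Qed.

Lemma ae_on_all a b (P : R -> Prop) : (forall t, a <= t <= b -> P t) -> ae_on a b P.
Proof.
  intros HP. exists (fun _ => False). split; [|auto].
  intros eps He. exists (fun _ => 0), (fun _ => 0).
  split; [intro; lra|split; [intros ? []|intro n]].
  replace (psum _ n) with 0; [lra|]. induction n; simpl; [auto|rewrite <- IHn; ring].
Qed.

Lemma exists_near_point a b x delta : a < b -> a <= x <= b -> 0 < delta ->
  exists s, a <= s <= b /\ s <> x /\ Rabs (s - x) < delta.
Proof.
  intros Hab Hx Hd. destruct (Rlt_le_dec x b).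
  - exists (x + Rmin delta (b - x) / 2).
    pose proof (Rmin_l delta (b - x)). pose proof (Rmin_r delta (b - x)).
    assert (0 < Rmin delta (b - x)) by (apply Rmin_glb_lt; lra).
    split; [lra|split; [lra|]]. rewrite Rabs_pos_eq; lra.
  - exists (x - Rmin delta (x - a) / 2).
    pose proof (Rmin_l delta (x - a)). pose proof (Rmin_r delta (x - a)).
    assert (0 < Rmin delta (x - a)) by (apply Rmin_glb_lt; lra).
    split; [lra|split; [lra|]]. rewrite Rabs_left; lra.
Qed.

Lemma has_deriv_on_decreasing_nonpos h a b x l : a < b -> a <= x <= b ->
  (forall s s', a <= s -> s < s' -> s' <= b -> h s' < h s) ->
  has_deriv_on h a b x l -> l <= 0.
Proof.
  intros Hab Hx Hdec Hd. apply Rnot_lt_le. intro Hl.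
  destruct (Hd l Hl) as [delta [Hdelta Q]].
  destruct (exists_near_point a b x delta Hab Hx Hdelta) as [s [Hs [Hsx Hsd]]].
  specialize (Q s Hs Hsx Hsd). apply Rabs_def2 in Q.
  set (q := (h s - h x) / (s - x)) in Q.
  assert (Hq : q * (s - x) = h s - h x) by (unfold q; field; lra).
  destruct (Rlt_le_dec x s) as [Hxs|Hsx'].
  - specialize (Hdec x s ltac:(lra) Hxs ltac:(lra)). nra.
  - specialize (Hdec s x ltac:(lra) ltac:(lra) ltac:(lra)). nra.
Qed.

Lemma has_deriv_on_id a b t : has_deriv_on (fun s => s) a b t 1.
Proof.
  intros eps He. exists 1. split; [lra|]. intros s _ Hne _.
  replace ((s - t) / (s - t) - 1) with 0 by (field; lra). rewrite Rabs_R0; lra.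
Qed.

Lemma has_deriv_on_bound h a b x l : has_deriv_on h a b x l ->
  forall eps, 0 < eps -> exists delta, 0 < delta /\ forall s, a <= s <= b ->
    Rabs (s - x) < delta -> Rabs (h s - h x - l * (s - x)) <= eps * Rabs (s - x).
Proof.
  intros H eps He. destruct (H eps He) as [delta [Hdelta Q]]. exists delta; split; auto.
  intros s Hs Hsx. destruct (Req_dec s x) as [->|Hne].
  - replace (h x - h x - l * (x - x)) with 0 by ring.
    replace (x - x) with 0 by ring. rewrite Rabs_R0; lra.
  - replace (h s - h x - l * (s - x)) with (((h s - h x) / (s - x) - l) * (s - x))
      by (field; lra).
    rewrite Rabs_mult. apply Rmult_le_compat_r; [apply Rabs_pos|].
    left; apply Q; auto.
Qed.

Lemma derivable_pt_lim_bound G y l : derivable_pt_lim G y l ->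
  forall eps, 0 < eps -> exists delta, 0 < delta /\ forall t,
    Rabs (t - y) < delta -> Rabs (G t - G y - l * (t - y)) <= eps * Rabs (t - y).
Proof.
  intros H eps He. destruct (H eps He) as [[delta Hdelta] Q]. exists delta; split; auto.
  intros t Ht. destruct (Req_dec t y) as [->|Hne].
  - replace (G y - G y - l * (y - y)) with 0 by ring.
    replace (y - y) with 0 by ring. rewrite Rabs_R0; lra.
  - specialize (Q (t - y) ltac:(lra) Ht). replace (y + (t - y)) with t in Q by ring.
    replace (G t - G y - l * (t - y)) with (((G t - G y) / (t - y) - l) * (t - y))
      by (field; lra).
    rewrite Rabs_mult. apply Rmult_le_compat_r; [apply Rabs_pos|lra].
Qed.

Lemma has_deriv_on_of_bound h a b x l :
  (forall eps, 0 < eps -> exists delta, 0 < delta /\ forall s, a <= s <= b ->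
     Rabs (s - x) < delta -> Rabs (h s - h x - l * (s - x)) <= eps * Rabs (s - x)) ->
  has_deriv_on h a b x l.
Proof.
  intros H eps He. destruct (H (eps / 2) ltac:(lra)) as [delta [Hdelta Q]].
  exists delta. split; auto. intros s Hs Hne Hsx. specialize (Q s Hs Hsx).
  assert (Hp : 0 < Rabs (s - x)) by (apply Rabs_pos_lt; lra).
  replace ((h s - h x) / (s - x) - l) with ((h s - h x - l * (s - x)) / (s - x))
    by (field; lra).
  unfold Rdiv. rewrite Rabs_mult, Rabs_inv.
  apply Rmult_lt_reg_r with (Rabs (s - x)); auto.
  rewrite Rmult_assoc, Rinv_l, Rmult_1_r by lra. nra.
Qed.

Lemma has_deriv_on_comp G alpha a b x da l :
  has_deriv_on alpha a b x da -> derivable_pt_lim G (alpha x) l ->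
  has_deriv_on (fun s => G (alpha s)) a b x (l * da).
Proof.
  intros Ha HG. apply has_deriv_on_of_bound. intros eps He.
  pose proof (Rabs_pos da). pose proof (Rabs_pos l).
  set (eta := Rmin 1 (eps / (Rabs da + Rabs l + 1))).
  assert (Heta1 : eta <= 1) by apply Rmin_l.
  assert (Heta : 0 < eta) by (apply Rmin_glb_lt; [lra|apply Rdiv_lt_0_compat; lra]).
  assert (Heta_eps : eta * (Rabs da + Rabs l + 1) <= eps).
  { assert (eta <= eps / (Rabs da + Rabs l + 1)) by apply Rmin_r.
    apply Rle_trans with (eps / (Rabs da + Rabs l + 1) * (Rabs da + Rabs l + 1));
      [apply Rmult_le_compat_r; lra|right; field; lra]. }
  destruct (has_deriv_on_bound alpha a b x da Ha eta Heta) as [dA [HdA QA]].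
  destruct (derivable_pt_lim_bound G (alpha x) l HG eta Heta) as [dG [HdG QG]].
  exists (Rmin dA (dG / (Rabs da + 1))).
  split; [apply Rmin_glb_lt; [auto|apply Rdiv_lt_0_compat; lra]|].
  intros s Hs Hsx.
  pose proof (Rmin_l dA (dG / (Rabs da + 1))). pose proof (Rmin_r dA (dG / (Rabs da + 1))).
  pose proof (Rabs_pos (s - x)).
  specialize (QA s Hs ltac:(lra)).
  assert (Hmove : Rabs (alpha s - alpha x) <= (Rabs da + 1) * Rabs (s - x)).
  { pose proof (Rabs_triang (alpha s - alpha x - da * (s - x)) (da * (s - x))) as Htri.
    replace (alpha s - alpha x - da * (s - x) + da * (s - x)) with (alpha s - alpha x)
      in Htri by ring.
    rewrite Rabs_mult in Htri. nra. }
  assert (Hclose : Rabs (alpha s - alpha x) < dG).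
  { apply Rle_lt_trans with ((Rabs da + 1) * Rabs (s - x)); auto.
    replace dG with ((Rabs da + 1) * (dG / (Rabs da + 1))) by (field; lra).
    apply Rmult_lt_compat_l; lra. }
  specialize (QG (alpha s) Hclose).
  replace (G (alpha s) - G (alpha x) - l * da * (s - x))
    with (G (alpha s) - G (alpha x) - l * (alpha s - alpha x)
          + l * (alpha s - alpha x - da * (s - x))) by ring.
  eapply Rle_trans; [apply Rabs_triang|]. rewrite Rabs_mult.
  assert (Rabs l * Rabs (alpha s - alpha x - da * (s - x)) <= Rabs l * (eta * Rabs (s - x)))
    by (apply Rmult_le_compat_l; lra).
  assert (eta * Rabs (alpha s - alpha x) <= eta * ((Rabs da + 1) * Rabs (s - x)))
    by (apply Rmult_le_compat_l; lra).
  assert (eta * (Rabs da + Rabs l + 1) * Rabs (s - x) <= eps * Rabs (s - x))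
    by (apply Rmult_le_compat_r; lra).
  nra.
Qed.

Lemma has_metric_deriv_bound {X : Type} (d : X -> X -> R) beta a b x v :
  (forall y, d y y = 0) -> has_metric_deriv d beta a b x v ->
  forall eps, 0 < eps -> exists delta, 0 < delta /\ forall s, a <= s <= b ->
    Rabs (s - x) < delta -> d (beta s) (beta x) <= (v + eps) * Rabs (s - x).
Proof.
  intros Hrefl H eps He. destruct (H eps He) as [delta [Hdelta Q]]. exists delta; split; auto.
  intros s Hs Hsx. destruct (Req_dec s x) as [->|Hne].
  - rewrite Hrefl. replace (x - x) with 0 by ring. rewrite Rabs_R0; lra.
  - specialize (Q s Hs Hne Hsx). apply Rabs_def2 in Q.
    assert (Hp : 0 < Rabs (s - x)) by (apply Rabs_pos_lt; lra).
    set (q := d (beta s) (beta x) / Rabs (s - x)) in Q.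
    replace (d (beta s) (beta x)) with (q * Rabs (s - x)) by (unfold q; field; lra).
    apply Rmult_le_compat_r; lra.
Qed.

Lemma has_metric_deriv_of_dist {X : Type} (d : X -> X -> R) beta F a b t k l :
  0 <= k -> (forall s, a <= s <= b -> d (beta s) (beta t) = k * Rabs (F s - F t)) ->
  derivable_pt_lim F t l -> has_metric_deriv d beta a b t (k * Rabs l).
Proof.
  intros Hk Hdist HF eps He.
  destruct (HF (eps / (k + 1)) ltac:(apply Rdiv_lt_0_compat; lra)) as [[delta Hdelta] Q].
  exists delta. split; auto. intros s Hs Hne Hsd.
  specialize (Q (s - t) ltac:(lra) Hsd). replace (t + (s - t)) with s in Q by ring.
  rewrite Hdist by auto. unfold Rdiv at 1. rewrite Rmult_assoc, <- Rabs_inv, <- Rabs_mult.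
  replace (k * Rabs ((F s - F t) * / (s - t)) - k * Rabs l)
    with (k * (Rabs ((F s - F t) / (s - t)) - Rabs l)) by (unfold Rdiv; ring).
  rewrite Rabs_mult, (Rabs_pos_eq k) by auto.
  apply Rle_lt_trans with (k * Rabs ((F s - F t) / (s - t) - l)).
  - apply Rmult_le_compat_l; [auto|apply Rabs_triang_inv2].
  - apply Rle_lt_trans with (k * (eps / (k + 1))); [apply Rmult_le_compat_l; lra|].
    apply Rmult_lt_reg_r with (k + 1); [lra|].
    replace (k * (eps / (k + 1)) * (k + 1)) with (k * eps) by (field; lra). nra.
Qed.

Definition clamp (A B s : R) : R := Rmax A (Rmin B s).

Lemma clamp_in A B s : A <= B -> A <= clamp A B s <= B.
Proof.
  intros. unfold clamp. split; [apply Rmax_l|].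
  apply Rmax_lub; [lra|apply Rmin_l].
Qed.

Lemma clamp_id A B s : A <= s <= B -> clamp A B s = s.
Proof. intros. unfold clamp. rewrite Rmin_right, Rmax_right; lra. Qed.

Lemma clamp_dist A B s s' : Rabs (clamp A B s - clamp A B s') <= Rabs (s - s').
Proof.
  unfold clamp, Rmin. destruct (Rle_dec B s), (Rle_dec B s'); unfold Rmax;
  repeat match goal with |- context [Rle_dec ?x ?y] => destruct (Rle_dec x y) end;
  unfold Rabs; repeat match goal with |- context [Rcase_abs ?x] => destruct (Rcase_abs x) end;
  lra.
Qed.

Lemma continuity_pt_of_eps (h : R -> R) x :
  (forall eps, 0 < eps -> exists delta, 0 < delta /\
     forall t, Rabs (t - x) < delta -> Rabs (h t - h x) < eps) -> continuity_pt h x.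
Proof.
  intros H eps He. destruct (H eps He) as [delta [Hdelta Q]].
  exists delta. split; [lra|]. intros t [_ Ht]. apply Q, Ht.
Qed.

Lemma continuity_pt_lower_bound (h : R -> R) t : continuity_pt h t -> 0 < h t ->
  exists r, 0 < r /\ forall s, Rabs (s - t) < r -> h t / 2 < h s.
Proof.
  intros Hc Hpos. destruct (Hc (h t / 2) ltac:(lra)) as [r [Hr Q]].
  exists r. split; auto. intros s Hs. destruct (Req_dec s t) as [->|Hne]; [lra|].
  assert (Hclose : Rabs (h s - h t) < h t / 2)
    by (apply (Q s); split; [split; [exact I|auto]|auto]).
  apply Rabs_def2 in Hclose. lra.
Qed.

(** * Monotone functions and absolutely continuous curves *)

Definition monotone_on (a b : R) (h : R -> R) : Prop :=
  (forall u v, a <= u -> u <= v -> v <= b -> h u <= h v) \/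
  (forall u v, a <= u -> u <= v -> v <= b -> h v <= h u).

Lemma monotone_on_abs_add a b h u v w : monotone_on a b h ->
  a <= u -> u <= v -> v <= w -> w <= b ->
  Rabs (h w - h u) = Rabs (h w - h v) + Rabs (h v - h u).
Proof.
  intros [H|H] ? ? ? ?.
  - assert (h u <= h v) by (apply H; lra). assert (h v <= h w) by (apply H; lra).
    rewrite !Rabs_pos_eq; lra.
  - assert (h v <= h u) by (apply H; lra). assert (h w <= h v) by (apply H; lra).
    rewrite !Rabs_left1; lra.
Qed.

Lemma partition_in a b n t : is_partition a b n t -> forall i, (i <= n)%nat -> a <= t i <= b.
Proof.
  intros [H0 [Hn Hm]].
  assert (A : forall i, (i <= n)%nat -> a <= t i).
  { induction i; intros Hi; [rewrite H0; lra|].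
    specialize (Hm i ltac:(lia)). specialize (IHi ltac:(lia)). lra. }
  assert (B : forall k i, (i + k = n)%nat -> t i <= b).
  { induction k; intros i Hi; [replace i with n by lia; rewrite Hn; lra|].
    specialize (IHk (S i) ltac:(lia)). specialize (Hm i ltac:(lia)). lra. }
  intros i Hi. split; auto. apply (B (n - i)%nat). lia.
Qed.

Lemma psum_abs_monotone a b h n t : monotone_on a b h -> is_partition a b n t ->
  psum (fun i => Rabs (h (t (S i)) - h (t i))) n = Rabs (h b - h a).
Proof.
  intros Hh Ht. pose proof (partition_in a b n t Ht) as Hin.
  destruct Ht as [H0 [Hn Hs]]. rewrite <- H0, <- Hn.
  assert (forall m, (m <= n)%nat ->
    psum (fun i => Rabs (h (t (S i)) - h (t i))) m = Rabs (h (t m) - h (t O))).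
  { induction m as [|m IH]; intros Hm; simpl.
    - replace (h (t O) - h (t O)) with 0 by ring. now rewrite Rabs_R0.
    - rewrite IH by lia. pose proof (Hin O ltac:(lia)). pose proof (Hin m ltac:(lia)).
      pose proof (Hin (S m) ltac:(lia)). pose proof (Hs m ltac:(lia)).
      rewrite (monotone_on_abs_add a b h (t O) (t m) (t (S m)) Hh); lra. }
  auto.
Qed.

Lemma abs_cont_chain {T : Type} (D : T -> T -> R) g a b : abs_cont D g a b ->
  small_on_short_chains a b (fun u v => D (g u) (g v)).
Proof.
  intros Hac eps He. destruct (Hac eps He) as [delta [Hdelta Q]]. exists delta; split; auto.
  intros l Hc Hb Hl. set (p0 := Piece 0 0 O).
  rewrite <- (psum_nth (fun p => D (g (lft p)) (g (rgt p))) l p0).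
  apply (Q (length l) (fun i => lft (nth i l p0)) (fun i => rgt (nth i l p0))).
  - intros i Hi. destruct (chain_nth a l p0 Hc i Hi) as [A [B _]].
    repeat split; auto. apply Hb, nth_In; auto.
  - intros i Hi. destruct (chain_nth a l p0 Hc i ltac:(lia)) as [_ [_ C]]. auto.
  - change (psum (fun i => plen (nth i l p0)) (length l) < delta).
    rewrite (psum_nth plen l p0). auto.
Qed.

Lemma abs_cont_comp {T T' : Type} (D : T -> T -> R) (D' : T' -> T' -> R) (phi : T -> T')
  g a b :
  (forall y z, D' (phi y) (phi z) <= D y z) -> abs_cont D g a b ->
  abs_cont D' (fun s => phi (g s)) a b.
Proof.
  intros Hphi Hac eps He. destruct (Hac eps He) as [delta [Hdelta Q]].
  exists delta; split; auto. intros n s t H1 H2 H3.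
  eapply Rle_lt_trans; [|apply (Q n s t H1 H2 H3)]. apply psum_le. auto.
Qed.

Lemma abs_cont_of_lipschitz {T : Type} (D : T -> T -> R) g a b L :
  0 <= L -> (forall s t, a <= s -> s <= t -> t <= b -> D (g s) (g t) <= L * (t - s)) ->
  abs_cont D g a b.
Proof.
  intros HL Hlip eps He. exists (eps / (L + 1)). split; [apply Rdiv_lt_0_compat; lra|].
  intros n s t Hst _ Hsum.
  apply Rle_lt_trans with (psum (fun i => (L + 1) * (t i - s i)) n).
  - apply psum_le. intros i Hi. destruct (Hst i Hi) as [? [? ?]].
    specialize (Hlip (s i) (t i) ltac:(lra) ltac:(lra) ltac:(lra)). nra.
  - rewrite psum_scal. apply Rmult_lt_compat_l with (r := L + 1) in Hsum; [|lra].
    replace ((L + 1) * (eps / (L + 1))) with eps in Hsum by (field; lra). auto.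
Qed.

(** * Primitives of [1 / f] *)

Section Primitive.

Context (f F : R -> R) (A B : R) (Hfpos : forall t, A <= t <= B -> 0 < f t)
  (HF : forall t, A <= t <= B -> derivable_pt_lim F t (/ f t)).

Lemma primitive_inv_increasing u v : A <= u -> u < v -> v <= B -> F u < F v.
Proof.
  intros Hu Huv Hv.
  destruct (MVT_cor2 F (fun t => / f t) u v Huv) as [c [Hc Hcuv]].
  { intros c Hc. apply HF. lra. }
  assert (0 < / f c) by (apply Rinv_0_lt_compat, Hfpos; lra). nra.
Qed.

Lemma primitive_inv_nondecreasing u v : A <= u -> u <= v -> v <= B -> F u <= F v.
Proof.
  intros. destruct (Req_dec u v) as [->|]; [lra|].
  left. apply primitive_inv_increasing; lra.
Qed.

Lemma primitive_inv_lipschitz : A <= B -> (forall t, A <= t <= B -> continuity_pt f t) ->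
  exists L, 0 <= L /\ forall u v, A <= u <= B -> A <= v <= B ->
    Rabs (F v - F u) <= L * Rabs (v - u).
Proof.
  intros HAB Hc. destruct (continuity_ab_min f A B HAB Hc) as [m [Hmin Hm]].
  assert (Hfm : 0 < f m) by auto.
  exists (/ f m). split; [left; now apply Rinv_0_lt_compat|].
  assert (Hle : forall u v, A <= u -> u < v -> v <= B ->
            Rabs (F v - F u) <= / f m * Rabs (v - u)).
  { intros u v Hu Huv Hv.
    destruct (MVT_cor2 F (fun t => / f t) u v Huv) as [c [Hc' Hcuv]].
    { intros c Hc'. apply HF. lra. }
    rewrite Hc', Rabs_mult, (Rabs_pos_eq (/ f c))
      by (left; apply Rinv_0_lt_compat, Hfpos; lra).
    apply Rmult_le_compat_r; [apply Rabs_pos|].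
    apply Rinv_le_contravar; [auto|apply Hmin; lra]. }
  intros u v Hu Hv. destruct (Rtotal_order u v) as [Huv|[->|Hvu]].
  - apply Hle; lra.
  - replace (F v - F v) with 0 by ring. rewrite Rabs_R0.
    apply Rmult_le_pos; [left; now apply Rinv_0_lt_compat|apply Rabs_pos].
  - rewrite (Rabs_minus_sym (F v)), (Rabs_minus_sym v). apply Hle; lra.
Qed.

End Primitive.

Lemma exists_primitive_inv f A B : A <= B ->
  (forall t, A <= t <= B -> continuity_pt f t /\ 0 < f t) ->
  exists F, forall t, A <= t <= B -> derivable_pt_lim F t (/ f t).
Proof.
  intros HAB Hf.
  assert (C0 : forall t, A <= t <= B -> continuity_pt (fun s => / f s) t).
  { intros t Ht. destruct (Hf t Ht). apply continuity_pt_inv; auto; lra. }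
  exists (primitive HAB (FTC_P1 HAB C0)). intros t Ht.
  exact (RiemannInt_P28 (f := fun s => / f s) HAB C0 Ht).
Qed.

Definition closed_set {T : Type} (D : T -> T -> R) (S : T -> Prop) : Prop :=
  open_set D (fun y => ~ S y).

Lemma exists_list_upper_bound {A : Type} (h : A -> R) (l : list A) :
  exists M, forall x, In x l -> h x <= M.
Proof.
  induction l as [|y l [M HM]]; [exists 0; intros x []|].
  exists (Rmax (h y) M). intros x [<-|Hx]; [apply Rmax_l|].
  eapply Rle_trans; [apply HM, Hx|apply Rmax_r].
Qed.

Lemma exists_list_lower_bound_pos {A : Type} (h : A -> R) (l : list A) :
  (forall x, In x l -> 0 < h x) -> exists m, 0 < m /\ forall x, In x l -> m <= h x.
Proof.
  induction l as [|y l IH]; intros Hpos; [exists 1; split; [lra|intros x []]|].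
  destruct IH as [m [Hm HM]]; [intros x Hx; apply Hpos; now right|].
  exists (Rmin (h y) m). split; [apply Rmin_glb_lt; auto; apply Hpos; now left|].
  intros x [<-|Hx]; [apply Rmin_l|]. eapply Rle_trans; [apply Rmin_r|auto].
Qed.

Section Compact.

Context {T : Type} (D : T -> T -> R) (Drefl : forall y, D y y = 0)
  (Dtri : forall x y z, D x z <= D x y + D y z).

Lemma open_ball y r : open_set D (fun z => D y z < r).
Proof.
  intros z Hz. exists (r - D y z). split; [lra|]. intros w Hw.
  specialize (Dtri y z w). lra.
Qed.

Lemma compact_bounded_above K (h : T -> R) : compact_set D K ->
  (forall y, K y -> exists r M, 0 < r /\ forall z, D y z < r -> h z <= M) ->
  exists M, forall z, K z -> h z <= M.
Proof.
  intros HK Hloc.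
  set (Idx := {p : T * R * R | 0 < snd (fst p) /\
                 forall z, D (fst (fst p)) z < snd (fst p) -> h z <= snd p}).
  destruct (HK Idx (fun i z => D (fst (fst (proj1_sig i))) z < snd (fst (proj1_sig i))))
    as [l Hl].
  - intro i. apply open_ball.
  - intros y Ky. destruct (Hloc y Ky) as [r [M [Hr HM]]].
    exists (exist _ (y, r, M) (conj Hr HM)). simpl. now rewrite Drefl.
  - destruct (exists_list_upper_bound (fun i : Idx => snd (proj1_sig i)) l) as [M HM].
    exists M. intros z Kz. destruct (Hl z Kz) as [i [Hin Hz]].
    specialize (HM i Hin). pose proof (proj2 (proj2_sig i) z Hz). simpl in *. lra.
Qed.

Lemma compact_closed_sub K S : compact_set D K -> (forall y, S y -> K y) ->
  closed_set D S -> compact_set D S.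
Proof.
  intros HK HSK Hcl Idx U HUo HUc.
  destruct (HK (option Idx) (fun o z => match o with Some i => U i z | None => ~ S z end))
    as [l Hl].
  - intros [i|]; [auto|exact Hcl].
  - intros x Kx. destruct (classic (S x)) as [Sx|Sx].
    + destruct (HUc x Sx) as [i Hi]. now exists (Some i).
    + now exists None.
  - exists (flat_map (fun o => match o with Some i => i :: nil | None => nil end) l).
    intros x Sx. destruct (Hl x (HSK x Sx)) as [[i|] [Hin Hi]]; [|contradiction].
    exists i. split; auto. apply in_flat_map. exists (Some i). simpl; auto.
Qed.

Lemma closed_set_and S1 S2 : closed_set D S1 -> closed_set D S2 ->
  closed_set D (fun y => S1 y /\ S2 y).
Proof.
  intros H1 H2 y Hy. destruct (classic (S1 y)) as [Y1|Y1].
  - destruct (H2 y ltac:(tauto)) as [r [Hr Hr']]. exists r. split; auto.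
    intros z Hz [_ ?]. now apply (Hr' z).
  - destruct (H1 y Y1) as [r [Hr Hr']]. exists r. split; auto.
    intros z Hz [? _]. now apply (Hr' z).
Qed.

Lemma closed_set_le (phi psi : T -> R) L : 0 <= L ->
  (forall y z, (phi y - psi y) - (phi z - psi z) <= L * D y z) ->
  closed_set D (fun y => phi y <= psi y).
Proof.
  intros HL Hlip y Hy. apply Rnot_le_lt in Hy.
  exists ((phi y - psi y) / (L + 1)). split; [apply Rdiv_lt_0_compat; lra|].
  intros z Hz. apply Rlt_not_le. specialize (Hlip y z).
  assert (L * D y z <= L * ((phi y - psi y) / (L + 1))) by (apply Rmult_le_compat_l; lra).
  assert (L * ((phi y - psi y) / (L + 1)) < phi y - psi y).
  { apply Rmult_lt_reg_r with (L + 1); [lra|].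
    replace (L * ((phi y - psi y) / (L + 1)) * (L + 1)) with (L * (phi y - psi y))
      by (field; lra).
    nra. }
  lra.
Qed.

Lemma compact_set_ext S S' : (forall y, S y <-> S' y) -> compact_set D S -> compact_set D S'.
Proof.
  intros Heq HS Idx U HUo HUc. destruct (HS Idx U HUo) as [l Hl].
  - intros y Hy. apply HUc, Heq, Hy.
  - exists l. intros y Hy. apply Hl, Heq, Hy.
Qed.

End Compact.

(** * Metric spaces and the generalized cone *)

Lemma in_I_between lo hi t1 t2 s : in_I lo hi t1 -> in_I lo hi t2 -> t1 <= s <= t2 ->
  in_I lo hi s.
Proof. unfold in_I. destruct lo, hi; simpl; intros; intuition lra. Qed.

Section Cone.

Context {X : Type} (d : X -> X -> R) (Hd : is_metric d).

Lemma d_nonneg x y : 0 <= d x y.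
Proof. apply Hd. Qed.

Lemma d_refl x : d x x = 0.
Proof. now apply Hd. Qed.

Lemma d_eq x y : d x y = 0 -> x = y.
Proof. apply Hd. Qed.

Lemma d_sym x y : d x y = d y x.
Proof. apply Hd. Qed.

Lemma d_tri x y z : d x z <= d x y + d y z.
Proof. apply Hd. Qed.

Lemma locally_small_dist_sub beta h a b x v l : monotone_on a b h ->
  has_metric_deriv d beta a b x v -> has_deriv_on h a b x l -> v <= Rabs l ->
  locally_small_at a b (fun u w => d (beta u) (beta w) - Rabs (h w - h u)) x.
Proof.
  intros Hh Hv Hl Hvl eps He.
  destruct (has_metric_deriv_bound d beta a b x v d_refl Hv (eps / 2) ltac:(lra))
    as [d1 [Hd1 M]].
  destruct (has_deriv_on_bound h a b x l Hl (eps / 2) ltac:(lra)) as [d2 [Hd2 Dh]].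
  exists (Rmin d1 d2). split; [now apply Rmin_glb_lt|].
  intros u w Hu Hux Hxw Hw Hwu.
  pose proof (Rmin_l d1 d2). pose proof (Rmin_r d1 d2).
  assert (Mu := M u ltac:(lra) ltac:(apply Rabs_def1; lra)).
  assert (Mw := M w ltac:(lra) ltac:(apply Rabs_def1; lra)).
  assert (Du := Dh u ltac:(lra) ltac:(apply Rabs_def1; lra)).
  assert (Dw := Dh w ltac:(lra) ltac:(apply Rabs_def1; lra)).
  rewrite (Rabs_left1 (u - x)) in Mu, Du by lra.
  rewrite (Rabs_pos_eq (w - x)) in Mw, Dw by lra.
  assert (Hw' : (Rabs l - eps / 2) * (w - x) <= Rabs (h w - h x)).
  { pose proof (Rabs_triang (h w - h x) (- (h w - h x - l * (w - x)))) as Htri.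
    rewrite Rabs_Ropp in Htri.
    replace (h w - h x + - (h w - h x - l * (w - x))) with (l * (w - x)) in Htri by ring.
    rewrite Rabs_mult, (Rabs_pos_eq (w - x)) in Htri by lra. lra. }
  assert (Hu' : (Rabs l - eps / 2) * (x - u) <= Rabs (h x - h u)).
  { pose proof (Rabs_triang (h x - h u) (h u - h x - l * (u - x))) as Htri.
    replace (h x - h u + (h u - h x - l * (u - x))) with (l * (x - u)) in Htri by ring.
    rewrite Rabs_mult, (Rabs_pos_eq (x - u)) in Htri by lra. lra. }
  rewrite (monotone_on_abs_add a b h u x w Hh) by lra.
  pose proof (d_tri (beta u) (beta x) (beta w)) as Htri.
  rewrite (d_sym (beta x) (beta w)) in Htri.
  assert (v * (w - u) <= Rabs l * (w - u)) by (apply Rmult_le_compat_r; lra).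
  nra.
Qed.

Lemma dist_le_of_metric_deriv_le beta h a b N :
  abs_cont d beta a b -> monotone_on a b h -> negligible N ->
  (forall x, a <= x <= b -> ~ N x -> exists v l,
     has_metric_deriv d beta a b x v /\ has_deriv_on h a b x l /\ v <= Rabs l) ->
  forall u w, a <= u -> u <= w -> w <= b -> d (beta u) (beta w) <= Rabs (h w - h u).
Proof.
  intros Hac Hh HN Hder u w Hu Huw Hw.
  enough (d (beta u) (beta w) - Rabs (h w - h u) <= 0) by lra.
  apply (nonpos_of_locally_small_ae a b (fun u w => d (beta u) (beta w) - Rabs (h w - h u)) N);
    auto.
  - intros u' v' w' ? ? ? ?. rewrite (monotone_on_abs_add a b h u' v' w' Hh) by lra.
    pose proof (d_tri (beta u') (beta v') (beta w')). lra.
  - intros x Hx Nx. destruct (Hder x Hx Nx) as [v [l [Hv [Hl Hvl]]]].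
    now apply locally_small_dist_sub with v l.
  - intros eps He. destruct (abs_cont_chain d beta a b Hac eps He) as [delta [Hdelta Q]].
    exists delta; split; auto. intros l Hc Hb Hl.
    eapply Rle_lt_trans; [|apply (Q l Hc Hb Hl)].
    apply lsum_le. intros p _. pose proof (Rabs_pos (h (rgt p) - h (lft p))). lra.
Qed.

(* The partition [0 <= u <= w <= 1] has sum at most [d x1 x2], which forces equality in
   the triangle inequalities. *)
Lemma geodesic_dist_additive (g : R -> X) x1 x2 :
  g 0 = x1 -> g 1 = x2 -> has_length d g 0 1 (d x1 x2) ->
  forall u w, 0 <= u -> u <= w -> w <= 1 -> d (g u) (g w) = d x1 (g w) - d x1 (g u).
Proof.
  intros H0 H1 [Hub _] u w Hu Huw Hw.
  set (t := fun i : nat => match i with O => 0 | 1%nat => u | 2%nat => w | _ => 1 end).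
  assert (Hsum : partition_sum d g 3 t <= d x1 x2).
  { apply Hub. exists 3%nat, t. split; [|reflexivity].
    split; [reflexivity|split; [reflexivity|]].
    intros i Hi. destruct i as [|[|[|i]]]; simpl; lra || lia. }
  unfold partition_sum in Hsum. simpl in Hsum. rewrite H0, H1 in Hsum.
  pose proof (d_tri x1 (g u) (g w)). pose proof (d_tri x1 (g w) x2). lra.
Qed.

Lemma geodesic_dist_surjective (g : R -> X) x1 x2 :
  continuous_on_int d g 0 1 -> g 0 = x1 -> g 1 = x2 ->
  forall l, 0 <= l <= d x1 x2 -> exists u, 0 <= u <= 1 /\ d x1 (g u) = l.
Proof.
  intros Hc H0 H1 l Hl.
  assert (Hcont : continuity (fun s => d x1 (g (clamp 0 1 s)) - l)).
  { intro x. apply continuity_pt_of_eps. intros eps He.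
    destruct (Hc (clamp 0 1 x) (clamp_in 0 1 x ltac:(lra)) eps He) as [delta [Hdelta Q]].
    exists delta. split; auto. intros t Ht.
    specialize (Q (clamp 0 1 t) (clamp_in 0 1 t ltac:(lra))
                  (Rle_lt_trans _ _ _ (clamp_dist 0 1 t x) Ht)).
    pose proof (d_tri x1 (g (clamp 0 1 t)) (g (clamp 0 1 x))).
    pose proof (d_tri x1 (g (clamp 0 1 x)) (g (clamp 0 1 t))) as Htri.
    rewrite (d_sym (g (clamp 0 1 x))) in Htri. apply Rabs_def1; lra. }
  destruct (IVT_cor _ 0 1 Hcont ltac:(lra)) as [u [Hu Hgu]].
  - rewrite !clamp_id, H0, H1, d_refl by lra. nra.
  - exists u. split; auto. rewrite clamp_id in Hgu; lra.
Qed.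

Lemma geodesic_unit_param : is_geodesic_space d -> forall x1 x2, exists sigma : R -> X,
  sigma 0 = x1 /\ sigma (d x1 x2) = x2 /\
  forall l m, 0 <= l <= d x1 x2 -> 0 <= m <= d x1 x2 -> d (sigma l) (sigma m) = Rabs (l - m).
Proof.
  intros Hgeo x1 x2. destruct (Hgeo x1 x2) as [g [Hc [H0 [H1 Hlen]]]].
  set (D := d x1 x2) in *.
  pose proof (geodesic_dist_additive g x1 x2 H0 H1 Hlen) as Hadd.
  destruct (choice (fun l u => 0 <= u <= 1 /\ (0 <= l <= D -> d x1 (g u) = l))) as [uf Huf].
  { intro l. destruct (classic (0 <= l <= D)) as [Hl|Hl].
    - destruct (geodesic_dist_surjective g x1 x2 Hc H0 H1 l Hl) as [u [Hu Hgu]].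
      exists u. auto.
    - exists 0. split; [lra|tauto]. }
  assert (HD : 0 <= D) by apply d_nonneg.
  assert (Hdist : forall l m, 0 <= l <= D -> 0 <= m <= D -> uf l <= uf m ->
            d (g (uf l)) (g (uf m)) = m - l).
  { intros l m Hl Hm Hlm. destruct (Huf l) as [? Hul]. destruct (Huf m) as [? Hum].
    rewrite Hadd, Hul, Hum by lra. ring. }
  exists (fun l => g (uf l)). split; [|split].
  - destruct (Huf 0) as [? Hu0]. apply d_eq. rewrite d_sym. apply Hu0. lra.
  - destruct (Huf D) as [? HuD]. apply d_eq.
    rewrite <- H1, Hadd, H1, HuD by lra. fold D. lra.
  - intros l m Hl Hm. destruct (Huf l) as [? _]. destruct (Huf m) as [? _].
    destruct (Rle_dec (uf l) (uf m)).
    + pose proof (d_nonneg (g (uf l)) (g (uf m))) as Hnn.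
      rewrite Hdist in Hnn |- * by lra. rewrite Rabs_left1; lra.
    + pose proof (d_nonneg (g (uf m)) (g (uf l))) as Hnn.
      rewrite d_sym. rewrite Hdist in Hnn |- * by lra. rewrite Rabs_pos_eq; lra.
Qed.

Lemma cone_dist_tri y y' y'' : cone_dist d y y'' <= cone_dist d y y' + cone_dist d y' y''.
Proof.
  unfold cone_dist. pose proof (d_tri (snd y) (snd y') (snd y'')).
  pose proof (Rabs_triang (fst y - fst y') (fst y' - fst y'')) as Htri.
  replace (fst y - fst y' + (fst y' - fst y'')) with (fst y - fst y'') in Htri by ring.
  lra.
Qed.

Lemma cone_dist_refl y : cone_dist d y y = 0.
Proof.
  unfold cone_dist. rewrite d_refl. replace (fst y - fst y) with 0 by ring.
  rewrite Rabs_R0; ring.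
Qed.

Lemma cone_dist_sym y y' : cone_dist d y y' = cone_dist d y' y.
Proof. unfold cone_dist. now rewrite Rabs_minus_sym, d_sym. Qed.

Lemma cone_dist_fst y y' : Rabs (fst y - fst y') <= cone_dist d y y'.
Proof. unfold cone_dist. pose proof (d_nonneg (snd y) (snd y')). lra. Qed.

Lemma cone_dist_snd y y' : d (snd y) (snd y') <= cone_dist d y y'.
Proof. unfold cone_dist. pose proof (Rabs_pos (fst y - fst y')). lra. Qed.


(* Tube lemma around each time slice, glued along [[a, b]] by real induction. *)
Lemma cone_compact_prod a b K : a <= b -> compact_set d K ->
  compact_set (cone_dist d) (fun y => a <= fst y <= b /\ K (snd y)).
Proof.
  intros Hab HK Idx U HUo HUc.
  assert (Hloc : forall t, a <= t <= b -> exists rho, 0 < rho /\ exists li : list Idx,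
            forall t' z, Rabs (t' - t) < rho -> K z -> exists i, In i li /\ U i (t', z)).
  { intros t Ht.
    set (J := {p : X * Idx * R | 0 < snd p /\
                 forall y, cone_dist d (t, fst (fst p)) y < snd p -> U (snd (fst p)) y}).
    destruct (HK J (fun j z => d (fst (fst (proj1_sig j))) z < snd (proj1_sig j) / 2))
      as [lj Hlj].
    - intro j. apply open_ball, d_tri.
    - intros z Kz. destruct (HUc (t, z) (conj Ht Kz)) as [i Hi].
      destruct (HUo i (t, z) Hi) as [r [Hr Hball]].
      exists (exist _ (z, i, r) (conj Hr Hball)). simpl. rewrite d_refl. lra.
    - destruct (exists_list_lower_bound_pos (fun j : J => snd (proj1_sig j) / 2) lj)
        as [rho [Hrho Hmin]].
      { intros j _. pose proof (proj1 (proj2_sig j)). simpl. lra. }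
      exists rho. split; auto. exists (map (fun j : J => snd (fst (proj1_sig j))) lj).
      intros t' z Ht' Kz. destruct (Hlj z Kz) as [j [Hin Hz]].
      exists (snd (fst (proj1_sig j))).
      split; [exact (in_map (fun j : J => snd (fst (proj1_sig j))) lj j Hin)|].
      specialize (Hmin j Hin). clear Hin. destruct j as [[[x i] r] [Hr Hball]].
      simpl in *. apply Hball. unfold cone_dist. simpl. rewrite Rabs_minus_sym. lra. }
  destruct (real_induction a b (fun u v => exists li : list Idx, forall t', u <= t' <= v ->
              forall z, K z -> exists i, In i li /\ U i (t', z))) as [li Hli]; auto.
  - intros u v w ? ? ? ? [l1 H1] [l2 H2]. exists (l1 ++ l2). intros t' Ht' z Kz.
    destruct (Rle_dec t' v).
    + destruct (H1 t' ltac:(lra) z Kz) as [i [? ?]].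
      exists i. split; auto. apply in_or_app; auto.
    + destruct (H2 t' ltac:(lra) z Kz) as [i [? ?]].
      exists i. split; auto. apply in_or_app; auto.
  - intros x Hx. destruct (Hloc x Hx) as [rho [Hrho [li Hli]]]. exists rho. split; auto.
    intros u v ? ? ? ? ?. exists li. intros t' Ht' z Kz. apply Hli; auto.
    apply Rabs_def1; lra.
  - exists li. intros [t z] [Ht Kz]. simpl in *. apply Hli; auto.
Qed.

Context (lo hi : Rbar) (f : R -> R)
  (Hf : forall t, in_I lo hi t -> continuity_pt f t /\ 0 < f t).

Lemma causal_speed_le da v c : 0 < c -> - da ^ 2 + c ^ 2 * v ^ 2 <= 0 -> v <= Rabs da / c.
Proof.
  intros Hc H. apply Rmult_le_reg_r with c; auto.
  replace (Rabs da / c * c) with (Rabs da) by (field; lra).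
  destruct (Rle_dec v 0); [pose proof (Rabs_pos da); nra|].
  rewrite <- (Rabs_pos_eq (v * c)) by nra. apply Rsqr_le_abs_0. unfold Rsqr. nra.
Qed.

(* Along a causal curve [|beta'| <= |alpha'| / f(alpha) <= |(G o alpha)'|]. *)
Lemma causal_dist_le g a b G :
  causal_curve d lo hi f g a b -> monotone_on a b (fun s => G (fst (g s))) ->
  (forall s, a <= s <= b ->
     exists l, derivable_pt_lim G (fst (g s)) l /\ / f (fst (g s)) <= l) ->
  forall u w, a <= u -> u <= w -> w <= b ->
    d (snd (g u)) (snd (g w)) <= Rabs (G (fst (g w)) - G (fst (g u))).
Proof.
  intros [Hab [HY [Hac [_ [N [HN Hae]]]]]] Hmono HG.
  apply (dist_le_of_metric_deriv_le (fun s => snd (g s)) (fun s => G (fst (g s))) a b N); auto.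
  - exact (abs_cont_comp (cone_dist d) d snd g a b cone_dist_snd Hac).
  - intros x Hx Nx. destruct (Hae x Hx Nx) as [da [v [Hda [Hv Hc]]]].
    destruct (HG x Hx) as [l [Hl Hfl]].
    assert (Hfx : 0 < f (fst (g x))) by apply (Hf _ (HY x Hx)).
    exists v, (l * da). split; [auto|split; [now apply has_deriv_on_comp|]].
    pose proof (causal_speed_le da v (f (fst (g x))) Hfx Hc) as Hspeed.
    assert (Hinv : 0 < / f (fst (g x))) by now apply Rinv_0_lt_compat.
    rewrite Rabs_mult, (Rabs_pos_eq l) by lra.
    unfold Rdiv in Hspeed. pose proof (Rabs_pos da). nra.
Qed.

Lemma future_directed_increasing g a b : future_directed d lo hi f g a b ->
  forall s s', a <= s -> s < s' -> s' <= b -> fst (g s) < fst (g s').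
Proof.
  intros [[Hab [_ [_ [[Hinc|Hdec] _]]]] Hfd]; auto.
  exfalso. destruct (ae_on_exists a b _ Hab Hfd) as [x [Hx [da [Hda Hpos]]]].
  pose proof (has_deriv_on_decreasing_nonpos _ a b x da Hab Hx Hdec Hda). lra.
Qed.

Lemma causal_le_time y y' : causal_le d lo hi f y y' -> fst y <= fst y'.
Proof.
  intros [->|[g [a [b [Hfd [<- <-]]]]]]; [lra|].
  assert (Hab : a < b) by apply Hfd.
  left. apply (future_directed_increasing g a b Hfd); lra.
Qed.

Lemma causal_curve_time_monotone g a b : causal_curve d lo hi f g a b ->
  monotone_on a b (fun s => fst (g s)).
Proof.
  intros [_ [_ [_ [[Hinc|Hdec] _]]]]; [left|right]; intros u v ? Huv ?;
    (destruct (Req_dec u v) as [->|]; [lra|]).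
  - left. apply Hinc; lra.
  - left. apply Hdec; lra.
Qed.

Lemma inv_f_locally_bounded y : in_Y lo hi y ->
  exists r M, 0 < r /\ forall z, cone_dist d y z < r -> / f (fst z) <= M.
Proof.
  intros Hy. destruct (Hf (fst y) Hy) as [Hc Hpos].
  destruct (continuity_pt_lower_bound f (fst y) Hc Hpos) as [r [Hr Hlow]].
  exists r, (2 / f (fst y)). split; auto. intros z Hz.
  pose proof (cone_dist_fst y z) as Hyz. rewrite Rabs_minus_sym in Hyz.
  specialize (Hlow (fst z) ltac:(lra)).
  apply Rle_trans with (/ (f (fst y) / 2)); [apply Rinv_le_contravar; lra|].
  right. field. lra.
Qed.

Lemma causal_dist_le_of_inv_f_le g a b M : causal_curve d lo hi f g a b ->
  (forall s, a <= s <= b -> / f (fst (g s)) <= M) ->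
  forall u w, a <= u -> u <= w -> w <= b ->
    d (snd (g u)) (snd (g w)) <= M * Rabs (fst (g w) - fst (g u)).
Proof.
  intros Hg HM u w Hu Huw Hw.
  assert (HM0 : 0 <= M).
  { destruct Hg as [Hab [HY _]]. specialize (HM a ltac:(lra)).
    pose proof (Rinv_0_lt_compat _ (proj2 (Hf _ (HY a ltac:(lra))))). lra. }
  rewrite <- (Rabs_pos_eq M) at 1 by auto. rewrite <- Rabs_mult.
  replace (M * (fst (g w) - fst (g u))) with (M * fst (g w) - M * fst (g u)) by ring.
  apply (causal_dist_le g a b (fun t => M * t) Hg); auto.
  - destruct (causal_curve_time_monotone g a b Hg) as [Hm|Hm]; [left|right]; intros;
      apply Rmult_le_compat_l; auto.
  - intros s Hs. exists (M * 1). split; [|rewrite Rmult_1_r; auto].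
    exact (derivable_pt_lim_scal id M _ 1 (derivable_pt_lim_id _)).
Qed.

(* On a compact set [1 / f <= M], so a causal curve there has length at most [(1 + M)]
   times its time increment, which the compact set bounds. *)
Lemma cone_non_totally_imprisoning : non_totally_imprisoning d lo hi f.
Proof.
  intros K HKY HK.
  destruct (compact_bounded_above (cone_dist d) cone_dist_refl cone_dist_tri K
              (fun y => / f (fst y)) HK) as [M HM].
  { intros y Ky. apply inv_f_locally_bounded, HKY, Ky. }
  destruct (compact_bounded_above (cone_dist d) cone_dist_refl cone_dist_tri K
              (fun y => Rabs (fst y)) HK) as [Sb HS].
  { intros y _. exists 1, (Rabs (fst y) + 1). split; [lra|]. intros z Hz.
    pose proof (cone_dist_fst y z) as Hyz. pose proof (Rabs_triang_inv (fst z) (fst y)).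
    rewrite Rabs_minus_sym in Hyz. lra. }
  pose proof (Rabs_pos M). pose proof (Rabs_pos Sb).
  exists ((1 + Rabs M) * (2 * Rabs Sb) + 1). split; [nra|].
  intros g a b Hg HgK n t Ht. unfold partition_sum.
  pose proof (partition_in a b n t Ht) as Hin.
  assert (HM' : forall s, a <= s <= b -> / f (fst (g s)) <= Rabs M).
  { intros s Hs. specialize (HM (g s) (HgK s Hs)). pose proof (Rle_abs M). lra. }
  apply Rle_trans
    with (psum (fun i => (1 + Rabs M) * Rabs (fst (g (t (S i))) - fst (g (t i)))) n).
  - apply psum_le. intros i Hi. unfold cone_dist.
    pose proof (causal_dist_le_of_inv_f_le g a b (Rabs M) Hg HM' (t i) (t (S i))
                  ltac:(apply Hin; lia) ltac:(apply Ht; lia) ltac:(apply Hin; lia)).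
    rewrite Rabs_minus_sym. lra.
  - rewrite psum_scal, (psum_abs_monotone a b _ n t (causal_curve_time_monotone g a b Hg) Ht).
    assert (Hab : a < b) by apply Hg.
    pose proof (HS (g a) (HgK a ltac:(lra))). pose proof (HS (g b) (HgK b ltac:(lra))).
    pose proof (Rabs_triang (fst (g b)) (- fst (g a))) as Htri. rewrite Rabs_Ropp in Htri.
    pose proof (Rle_abs Sb).
    assert (Rabs (fst (g b) - fst (g a)) <= 2 * Rabs Sb) by (unfold Rminus; lra).
    nra.
Qed.

Lemma future_directed_graph (beta : R -> X) t1 t2 L :
  t1 < t2 -> in_I lo hi t1 -> in_I lo hi t2 -> 0 <= L ->
  (forall s t, t1 <= s -> s <= t -> t <= t2 -> d (beta s) (beta t) <= L * (t - s)) ->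
  (forall t, t1 <= t <= t2 ->
     exists v, has_metric_deriv d beta t1 t2 t v /\ 0 <= f t * v <= 1) ->
  future_directed d lo hi f (fun s => (s, beta s)) t1 t2.
Proof.
  intros H12 HI1 HI2 HL Hlip Hspeed.
  split; [split; [auto|split; [|split; [|split]]]|].
  - intros s Hs. apply (in_I_between lo hi t1 t2); auto.
  - apply abs_cont_of_lipschitz with (1 + L); [lra|].
    intros s t Hs Hst Ht. unfold cone_dist. simpl.
    rewrite Rabs_left1 by lra. specialize (Hlip s t Hs Hst Ht). lra.
  - left. intros s s' _ Hss' _. exact Hss'.
  - apply ae_on_all. intros t Ht. destruct (Hspeed t Ht) as [v [Hv Hfv]].
    exists 1, v. split; [apply has_deriv_on_id|split; [auto|]]. simpl. nra.
  - apply ae_on_all. intros t _. exists 1. split; [apply has_deriv_on_id|lra].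
Qed.

Lemma causal_le_dist F A B y y' : (forall t, A <= t <= B -> in_I lo hi t) ->
  (forall t, A <= t <= B -> derivable_pt_lim F t (/ f t)) ->
  causal_le d lo hi f y y' -> A <= fst y -> fst y' <= B ->
  d (snd y) (snd y') <= F (fst y') - F (fst y).
Proof.
  intros HI HF Hyy' HA HB. pose proof (causal_le_time y y' Hyy') as Hle.
  destruct Hyy' as [<-|[g [a [b [Hfd [<- <-]]]]]]; [rewrite d_refl; lra|].
  pose proof (future_directed_increasing g a b Hfd) as Hinc.
  assert (Hab : a < b) by apply Hfd.
  assert (Hinc' : forall u v, a <= u -> u <= v -> v <= b -> fst (g u) <= fst (g v)).
  { intros u v ? ? ?. destruct (Req_dec u v) as [->|]; [lra|]. left; apply Hinc; lra. }
  assert (Hrange : forall s, a <= s <= b -> A <= fst (g s) <= B).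
  { intros s Hs. pose proof (Hinc' a s). pose proof (Hinc' s b). lra. }
  assert (Hmono : forall u v, a <= u -> u <= v -> v <= b -> F (fst (g u)) <= F (fst (g v))).
  { intros u v Hu Huv Hv.
    pose proof (Hrange u ltac:(lra)). pose proof (Hrange v ltac:(lra)).
    pose proof (Hinc' u v Hu Huv Hv).
    apply (primitive_inv_nondecreasing f F A B (fun t Ht => proj2 (Hf t (HI t Ht))) HF); lra. }
  rewrite <- (Rabs_pos_eq (F (fst (g b)) - F (fst (g a)))) by (pose proof (Hmono a b); lra).
  apply (causal_dist_le g a b F (proj1 Hfd)); try lra.
  - now left.
  - intros s Hs. exists (/ f (fst (g s))). split; [apply HF, Hrange, Hs|lra].
Qed.

(* A geodesic from [x1] to [x2] run at parameter [k (F s - F t1)], with [k <= 1] chosen so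
   that it arrives at time [t2], has speed [k / f <= 1 / f]. *)
Lemma exists_slow_geodesic F t1 t2 x1 x2 : is_geodesic_space d -> t1 < t2 ->
  (forall t, t1 <= t <= t2 -> in_I lo hi t) ->
  (forall t, t1 <= t <= t2 -> derivable_pt_lim F t (/ f t)) ->
  d x1 x2 <= F t2 - F t1 ->
  exists beta L, beta t1 = x1 /\ beta t2 = x2 /\ 0 <= L /\
    (forall s t, t1 <= s -> s <= t -> t <= t2 -> d (beta s) (beta t) <= L * (t - s)) /\
    (forall t, t1 <= t <= t2 ->
       exists v, has_metric_deriv d beta t1 t2 t v /\ 0 <= f t * v <= 1).
Proof.
  intros Hgeo H12 HI HF Hdist.
  assert (Hpos : forall t, t1 <= t <= t2 -> 0 < f t) by (intros; apply Hf, HI; auto).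
  assert (Hmon := primitive_inv_nondecreasing f F t1 t2 Hpos HF).
  destruct (primitive_inv_lipschitz f F t1 t2 Hpos HF ltac:(lra)
              ltac:(intros; apply Hf, HI; auto)) as [L [HL HLip]].
  destruct (geodesic_unit_param Hgeo x1 x2) as [sigma [Hs0 [HsD Hsd]]].
  set (D := d x1 x2) in *. set (Dl := F t2 - F t1) in *.
  assert (HDl : 0 < Dl)
    by (pose proof (primitive_inv_increasing f F t1 t2 Hpos HF t1 t2); unfold Dl; lra).
  set (k := D / Dl).
  assert (HD0 : 0 <= D) by apply d_nonneg.
  assert (Hk : 0 <= k <= 1).
  { unfold k. split; [apply Rmult_le_pos; [lra|left; now apply Rinv_0_lt_compat]|].
    apply Rmult_le_reg_r with Dl; auto. unfold Rdiv. rewrite Rmult_assoc, Rinv_l; lra. }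
  assert (HkD : k * Dl = D) by (unfold k; field; lra).
  assert (Harg : forall s, t1 <= s <= t2 -> 0 <= k * (F s - F t1) <= D).
  { intros s Hs. pose proof (Hmon t1 s). pose proof (Hmon s t2).
    split; [nra|]. rewrite <- HkD. apply Rmult_le_compat_l; unfold Dl; lra. }
  set (beta := fun s => sigma (k * (F s - F t1))).
  assert (Hbeta : forall s t, t1 <= s <= t2 -> t1 <= t <= t2 ->
            d (beta s) (beta t) = k * Rabs (F s - F t)).
  { intros s t Hs Ht. unfold beta. rewrite Hsd by auto.
    replace (k * (F s - F t1) - k * (F t - F t1)) with (k * (F s - F t)) by ring.
    rewrite Rabs_mult, (Rabs_pos_eq k); lra. }
  exists beta, (k * L). split; [|split; [|split; [|split]]].
  - unfold beta. replace (k * (F t1 - F t1)) with 0 by ring. now rewrite Hs0.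
  - unfold beta. fold Dl. now rewrite HkD, HsD.
  - apply Rmult_le_pos; lra.
  - intros s t Hs Hst Ht. rewrite Hbeta by lra.
    rewrite <- (Rabs_pos_eq (t - s)) by lra. rewrite Rabs_minus_sym, Rmult_assoc.
    apply Rmult_le_compat_l; [lra|apply HLip; lra].
  - intros t Ht. exists (k * Rabs (/ f t)). split.
    + apply has_metric_deriv_of_dist with F; [lra| |auto].
      intros s Hs. apply Hbeta; lra.
    + pose proof (Hpos t Ht). rewrite Rabs_pos_eq by (left; now apply Rinv_0_lt_compat).
      replace (f t * (k * / f t)) with k by (field; lra). lra.
Qed.

Lemma causal_le_of_dist_le F t1 t2 x1 x2 : is_geodesic_space d ->
  t1 <= t2 -> in_I lo hi t1 -> in_I lo hi t2 ->
  (forall t, t1 <= t <= t2 -> derivable_pt_lim F t (/ f t)) ->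
  d x1 x2 <= F t2 - F t1 -> causal_le d lo hi f (t1, x1) (t2, x2).
Proof.
  intros Hgeo H12 HI1 HI2 HF Hdist.
  destruct (Req_dec t1 t2) as [<-|Hne].
  { left. f_equal. apply d_eq. pose proof (d_nonneg x1 x2). lra. }
  assert (HI : forall t, t1 <= t <= t2 -> in_I lo hi t)
    by (intros t Ht; apply (in_I_between lo hi t1 t2); auto).
  destruct (exists_slow_geodesic F t1 t2 x1 x2 Hgeo ltac:(lra) HI HF Hdist)
    as [beta [L [Hb1 [Hb2 [HL [Hlip Hspeed]]]]]].
  right. exists (fun s => (s, beta s)), t1, t2.
  split; [apply future_directed_graph with L; auto; lra|].
  now rewrite Hb1, Hb2.
Qed.

Lemma cone_compact_between_levels G L tp tq xp xq : proper_metric d -> tp <= tq -> 0 <= L ->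
  (forall s t, Rabs (G s - G t) <= L * Rabs (s - t)) ->
  (forall t, tp <= t <= tq -> G t <= G tq) ->
  compact_set (cone_dist d) (fun r => tp <= fst r /\ fst r <= tq /\
    d xp (snd r) <= G (fst r) - G tp /\ d (snd r) xq <= G tq - G (fst r)).
Proof.
  intros Hprop Hpq HL HLip Hmon.
  assert (HLipc : forall y z : R * X, G (fst y) - G (fst z) <= L * cone_dist d y z).
  { intros y z. eapply Rle_trans; [apply Rle_abs|]. eapply Rle_trans; [apply HLip|].
    apply Rmult_le_compat_l; [auto|apply cone_dist_fst]. }
  assert (Hfst : forall y z : R * X, fst y - fst z <= cone_dist d y z)
    by (intros y z; eapply Rle_trans; [apply Rle_abs|apply cone_dist_fst]).
  apply (compact_closed_sub (cone_dist d)
           (fun y => tp <= fst y <= tq /\ d xp (snd y) <= G tq - G tp)).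
  - exact (cone_compact_prod tp tq (fun z => d xp z <= G tq - G tp) Hpq (Hprop xp _)).
  - intros [tr xr] [T1 [T2 [H1 H2]]]. simpl in *. pose proof (Hmon tr). split; lra.
  - repeat apply closed_set_and.
    + apply (closed_set_le _ (fun _ => tp) fst 1); [lra|]. intros y z.
      rewrite cone_dist_sym. specialize (Hfst z y). lra.
    + apply (closed_set_le _ fst (fun _ => tq) 1); [lra|]. intros y z.
      specialize (Hfst y z). lra.
    + apply (closed_set_le _ (fun r => d xp (snd r)) (fun r => G (fst r) - G tp) (1 + L));
        [lra|]. intros y z.
      pose proof (d_tri xp (snd z) (snd y)) as Htri. rewrite (d_sym (snd z)) in Htri.
      pose proof (cone_dist_snd y z). pose proof (HLipc z y) as HG.
      rewrite cone_dist_sym in HG. lra.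
    + apply (closed_set_le _ (fun r => d (snd r) xq) (fun r => G tq - G (fst r)) (1 + L));
        [lra|]. intros y z.
      pose proof (d_tri (snd y) (snd z) xq). pose proof (cone_dist_snd y z).
      pose proof (HLipc y z). lra.
Qed.

(* With [F] a primitive of [1 / f], the diamond is the set of [(t, x)] with
   [d(xp, x) <= F t - F tp] and [d(x, xq) <= F tq - F t]; clamping [F] to [[tp, tq]]
   makes it globally Lipschitz without changing this set. *)
Lemma cone_diamond_compact : is_geodesic_space d -> proper_metric d ->
  forall p q, in_Y lo hi p -> in_Y lo hi q ->
    compact_set (cone_dist d) (diamond d lo hi f p q).
Proof.
  intros Hgeo Hprop [tp xp] [tq xq] Hp Hq. unfold in_Y in Hp, Hq. simpl in Hp, Hq.
  destruct (Rle_dec tp tq) as [Hpq|Hpq]; cycle 1.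
  { intros Idx U _ _. exists nil. intros r [_ [H1 H2]].
    apply causal_le_time in H1, H2. simpl in *. lra. }
  assert (HI : forall t, tp <= t <= tq -> in_I lo hi t)
    by (intros t Ht; apply (in_I_between lo hi tp tq); auto).
  assert (Hpos : forall t, tp <= t <= tq -> 0 < f t) by (intros; apply Hf, HI; auto).
  destruct (exists_primitive_inv f tp tq Hpq) as [F HF]; [intros t Ht; apply Hf, HI, Ht|].
  destruct (primitive_inv_lipschitz f F tp tq Hpos HF Hpq ltac:(intros; apply Hf, HI; auto))
    as [L [HL HLip]].
  set (Fc := fun t => F (clamp tp tq t)).
  assert (HFc : forall t, tp <= t <= tq -> Fc t = F t)
    by (intros; unfold Fc; now rewrite clamp_id).
  apply (compact_set_ext (cone_dist d) (fun r => tp <= fst r /\ fst r <= tq /\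
    d xp (snd r) <= Fc (fst r) - Fc tp /\ d (snd r) xq <= Fc tq - Fc (fst r))).
  - intros [tr xr]. unfold diamond. simpl. split.
    + intros [T1 [T2 [H1 H2]]]. rewrite !HFc in H1, H2 by lra.
      split; [apply HI; simpl; lra|split].
      * apply (causal_le_of_dist_le F tp tr xp xr Hgeo); auto. intros; apply HF; lra.
      * apply (causal_le_of_dist_le F tr tq xr xq Hgeo); auto. intros; apply HF; lra.
    + intros [_ [H1 H2]].
      pose proof (causal_le_time _ _ H1). pose proof (causal_le_time _ _ H2).
      pose proof (causal_le_dist F tp tq _ _ HI HF H1).
      pose proof (causal_le_dist F tp tq _ _ HI HF H2).
      simpl in *. rewrite !HFc by lra. repeat split; lra.
  - apply cone_compact_between_levels with L; auto.
    + intros s t. unfold Fc. eapply Rle_trans; [apply HLip; apply clamp_in; lra|].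
      apply Rmult_le_compat_l; [auto|apply clamp_dist].
    + intros t Ht. rewrite !HFc by lra.
      apply (primitive_inv_nondecreasing f F tp tq Hpos HF); lra.
Qed.

End Cone.

Theorem proposition4p10 (X : Type) (d : X -> X -> R) (lo hi : Rbar) (f : R -> R) :
  is_metric d -> is_length_space d -> is_geodesic_space d -> proper_metric d ->
  Rbar_lt lo hi ->
  (forall t, in_I lo hi t -> continuity_pt f t /\ 0 < f t) ->
  globally_hyperbolic d lo hi f.
Proof.
  intros Hd _ Hgeo Hprop _ Hf. split.
  - exact (cone_non_totally_imprisoning d Hd lo hi f Hf).
  - intros p q Hp Hq. exact (cone_diamond_compact d Hd lo hi f Hf Hgeo Hprop p q Hp Hq).
Qed.
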